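(* Let $(M,\cdot,1)$ be an arbitrary monoid, $\Sigma$ a finite alphabet, and $\ell:\Sigma^*\to M$ an $M$-language. The following two conditions are equivalent: (i) $\ell$ is a recognizable $M$-language; (ii) there exists a factorization $(g,f)$ on $L$ such that the right congruence $\equiv^{(g,f)}_{f(\ell)}$ on $\Sigma^*$ has finite index.
   Context: $\Sigma^*$ is the free monoid of finite words over $\Sigma$, with empty word $\varepsilon$. An $M$-language is a total function $\ell:\Sigma^*\to M$; $L$ denotes the set of all $M$-languages. For $m\in M$, $\ell\in L$, $m\cdot\ell\in L$ is defined by $(m\cdot\ell)(\gamma)=m\cdot\ell(\gamma)$. Let $F$ be the set of all functions $L\to L$ (with $f_e$ the identity) and $G$ the set of all functions $L\to M$. A factorization on $L$ is a pair $(g,f)\in G\times F$ with $g(\ell)\cdot f(\ell)=\ell$ for every $\ell\in L$. For a word $\alpha$, $\Delta_\alpha\in F$ is defined by $\Delta_\alpha(\ell)(\gamma)=\ell(\alpha\gamma)$. Given a factorization $(g,f)$, define $S^{(g,f)}_\alpha\in F$ for $\alpha\in\Sigma^*$ recursively by $S^{(g,f)}_\varepsilon=f_e$ and $S^{(g,f)}_{\alpha\sigma}=f\circ\Delta_\sigma\circ S^{(g,f)}_\alpha$ for $\sigma\in\Sigma$. For $\ell\in L$, the relation $\equiv^{(g,f)}_\ell$ on $\Sigma^*$ is $\alpha\equiv^{(g,f)}_\ell\beta\iff S^{(g,f)}_\alpha(\ell)=S^{(g,f)}_\beta(\ell)$; it is a right congruence, and it has finite index if it has finitely many equivalence classes.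 An $M$-DFA is a tuple $A=(Q,\Sigma,u,i_u,\delta,w,\rho)$ with $Q$ a finite nonempty set of states, $u\in Q$ the initial state, $i_u\in M$ the initial value, $\delta:Q\times\Sigma\to Q$ the state-transition function, $w:Q\times\Sigma\to M$ the monoid-transition function and $\rho:Q\to M$ the final function. Extend $\delta$ to $\Sigma^*$ by $q\varepsilon=q$, $q(\alpha\sigma)=\delta(q\alpha,\sigma)$ (writing $q\alpha$ for the extended $\delta(q,\alpha)$), and $w$ by $w^*(q,\varepsilon)=1$, $w^*(q,\alpha\sigma)=w^*(q,\alpha)\cdot w(q\alpha,\sigma)$. The $M$-language recognized by $A$ is $\mathcal{A}(\alpha)=i_u\cdot w^*(u,\alpha)\cdot\rho(u\alpha)$. An $M$-language is recognizable if it is recognized by some $M$-DFA. *)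

From mathcomp Require Import all_boot.
Set Implicit Arguments. Unset Strict Implicit. Unset Printing Implicit Defensive.

Section MLang.
Variables (M : Type) (one : M) (mul : Monoid.law one) (Sigma : finType).

Definition word := seq Sigma.
Definition mlang := word -> M.

Definition lscale (m : M) (l : mlang) : mlang := fun g => mul m (l g).

(* (g,f) is a factorization on L: g(l) . f(l) = l for every l
   (equality of languages, i.e. of functions, read pointwise) *)
Definition factorization (g : mlang -> M) (f : mlang -> mlang) : Prop :=
  forall l : mlang, forall gam : word, lscale (g l) (f l) gam = l gam.

Definition Delta (alpha : word) (l : mlang) : mlang := fun gam => l (alpha ++ gam).

(* S_eps = id, S_{alpha sigma} = f o Delta_sigma o S_alpha *)
Definition S (f : mlang -> mlang) (alpha : word) (l : mlang) : mlang :=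
  foldl (fun l' s => f (Delta [:: s] l')) l alpha.

Definition congr_rel (f : mlang -> mlang) (l : mlang) (alpha beta : word) : Prop :=
  forall gam : word, S f alpha l gam = S f beta l gam.

Definition finite_index (R : word -> word -> Prop) : Prop :=
  exists reps : seq word, forall alpha : word, exists2 beta, beta \in reps & R alpha beta.

(* M-DFA; Q finite and nonempty (it contains u) *)
Record MDFA := {
  mdfa_Q : finType;
  mdfa_u : mdfa_Q;
  mdfa_iu : M;
  mdfa_delta : mdfa_Q -> Sigma -> mdfa_Q;
  mdfa_w : mdfa_Q -> Sigma -> M;
  mdfa_rho : mdfa_Q -> M }.

Definition dstar (A : MDFA) (q : mdfa_Q A) (alpha : word) : mdfa_Q A :=
  foldl (@mdfa_delta A) q alpha.

(* w*(q,eps) = 1, w*(q, alpha sigma) = w*(q,alpha) . w(q alpha, sigma) *)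
Definition wstar (A : MDFA) (q : mdfa_Q A) (alpha : word) : M :=
  (foldl (fun pm s => (@mdfa_delta A pm.1 s, mul pm.2 (@mdfa_w A pm.1 s)))
         (q, one) alpha).2.

Definition mdfa_lang (A : MDFA) : mlang := fun alpha =>
  mul (mul (@mdfa_iu A) (@wstar A (@mdfa_u A) alpha))
      (@mdfa_rho A (@dstar A (@mdfa_u A) alpha)).

Definition recognizable (l : mlang) : Prop :=
  exists A : MDFA, forall alpha : word, mdfa_lang A alpha = l alpha.

End MLang.

(* A recognizable language has only finitely many state languages
   L_q(γ) = w*(q,γ) ρ(qγ), and Δ_σ L_q = w(q,σ) L_{qσ}.  Factoring every
   language of the form m L_q as (m, L_q) therefore makes each S_α(f ℓ) a state
   language, so the congruence has finite index.  Conversely, given finitely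
   many representatives of the classes of ≡, the classes themselves are the
   states of an M-DFA: reading σ from the class of α leads to the class of ασ
   with weight g(Δ_σ S_α(f ℓ)), and the final weight is S_α(f ℓ)(ε). *)

From Stdlib Require Import ClassicalEpsilon.
From mathcomp Require Import all_boot.
Import Monoid.Theory.

Set Implicit Arguments.
Unset Strict Implicit.
Unset Printing Implicit Defensive.

Section MonoidLanguages.
Variables (M : Type) (one : M) (mul : Monoid.law one) (Sigma : finType).

Local Notation word := (word Sigma).
Local Notation mlang := (mlang M Sigma).

Lemma S_nil (f : mlang -> mlang) (l : mlang) : S f [::] l = l.
Proof. by []. Qed.

Lemma S_rcons (f : mlang -> mlang) (a : word) (s : Sigma) (l : mlang) :
  S f (rcons a s) l = f (Delta [:: s] (S f a l)).
Proof. by rewrite /S foldl_rcons. Qed.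

Lemma congr_rel_finite_index (f : mlang -> mlang) (l : mlang)
    (Q : finType) (e : Q -> mlang) :
  (forall a, exists q, S f a l = e q) -> finite_index (congr_rel f l).
Proof.
move=> S_range.
pose reach q := epsilon (inhabits [::]) (fun a => S f a l = e q).
exists [seq reach q | q <- enum Q] => a.
have [q Saq] := S_range a.
exists (reach q); first by rewrite map_f ?mem_enum.
have reach_q : S f (reach q) l = e q :=
  epsilon_spec _ (fun b => S f b l = e q) (ex_intro _ a Saq).
by move=> gam; rewrite Saq reach_q.
Qed.

Lemma finite_index_classes (R : word -> word -> Prop) :
  finite_index R ->
  exists (Q : finType) (rep : Q -> word) (cls : word -> Q),
    forall a, R a (rep (cls a)).
Proof.
case=> reps reps_cover.
have cls_ex a : exists b : seq_sub reps, R a (ssval b).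
  by have [b b_rep Rab] := reps_cover a; exists (SeqSub b_rep).
exists (seq_sub reps), (@ssval _ reps).
by exists (fun a => proj1_sig (constructive_indefinite_description _ (cls_ex a))) => a;
  case: constructive_indefinite_description.
Qed.

Section StateLanguages.
Variable A : MDFA M Sigma.

Definition state_lang (q : mdfa_Q A) : mlang :=
  fun gam => mul (wstar mul q gam) (mdfa_rho (dstar q gam)).

Lemma wstar_foldl (q : mdfa_Q A) (m : M) (gam : word) :
  foldl (fun pm s => (mdfa_delta pm.1 s, mul pm.2 (mdfa_w pm.1 s))) (q, m) gam
  = (dstar q gam, mul m (wstar mul q gam)).
Proof.
elim: gam q m => [|s gam IH] q m /=; first by rewrite mulm1.
by rewrite /wstar /= !IH /= !mul1m mulmA.
Qed.

Lemma wstar_cons (q : mdfa_Q A) (s : Sigma) (gam : word) :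
  wstar mul q (s :: gam) = mul (mdfa_w q s) (wstar mul (mdfa_delta q s) gam).
Proof. by rewrite {1}/wstar /= wstar_foldl /= mul1m. Qed.

Lemma state_lang_nil (q : mdfa_Q A) : state_lang q [::] = mdfa_rho q.
Proof. exact: mul1m. Qed.

Lemma state_lang_cons (q : mdfa_Q A) (s : Sigma) (gam : word) :
  state_lang q (s :: gam) = mul (mdfa_w q s) (state_lang (mdfa_delta q s) gam).
Proof. by rewrite /state_lang wstar_cons mulmA. Qed.

Lemma mdfa_langE (gam : word) :
  mdfa_lang mul A gam = mul (mdfa_iu A) (state_lang (mdfa_u A) gam).
Proof. by rewrite /mdfa_lang mulmA. Qed.

End StateLanguages.

Section ScaledFactorization.
Variables (Q : Type) (e : Q -> mlang).

Definition scaled_member (l : mlang) : Prop :=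
  exists p : M * Q, forall gam, l gam = mul p.1 (e p.2 gam).

Definition scaled_split (l : mlang) : M * mlang :=
  match excluded_middle_informative (scaled_member l) with
  | left H => let: exist p _ := constructive_indefinite_description _ H in (p.1, e p.2)
  | right _ => (one, l)
  end.

Definition scaled_g (l : mlang) : M := (scaled_split l).1.
Definition scaled_f (l : mlang) : mlang := (scaled_split l).2.

Lemma scaled_split_factorization : factorization mul scaled_g scaled_f.
Proof.
move=> l gam; rewrite /lscale /scaled_g /scaled_f /scaled_split.
case: excluded_middle_informative => [H | _]; last exact: mul1m.
by case: constructive_indefinite_description => p /= ->.
Qed.

Lemma scaled_split_member (l : mlang) :
  scaled_member l -> exists q, scaled_f l = e q.
Proof.
rewrite /scaled_f /scaled_split; case: excluded_middle_informative => // H _.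
by case: constructive_indefinite_description => p _; exists p.2.
Qed.

End ScaledFactorization.

Lemma S_scaled_split_state (A : MDFA M Sigma) (l : mlang) :
  (forall gam, mdfa_lang mul A gam = l gam) ->
  forall a, exists q : mdfa_Q A,
    S (scaled_f (@state_lang A)) a (scaled_f (@state_lang A) l) = state_lang q.
Proof.
move=> Al; elim/last_ind => [|a s [q Saq]].
  apply: scaled_split_member; exists (mdfa_iu A, mdfa_u A) => gam.
  by rewrite -Al mdfa_langE.
rewrite S_rcons Saq; apply: scaled_split_member.
by exists (mdfa_w q s, mdfa_delta q s) => gam; rewrite /Delta state_lang_cons.
Qed.

Section ClassAutomaton.
Variables (g : mlang -> M) (f : mlang -> mlang) (l : mlang).
Hypothesis gf_fact : factorization mul g f.
Variables (Q : finType) (rep : Q -> word) (cls : word -> Q).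
Hypothesis cls_congr : forall a, congr_rel f (f l) a (rep (cls a)).

Definition class_lang (q : Q) : mlang := S f (rep q) (f l).

Definition class_mdfa : MDFA M Sigma := {|
  mdfa_Q := Q;
  mdfa_u := cls [::];
  mdfa_iu := g l;
  mdfa_delta := fun q s => cls (rcons (rep q) s);
  mdfa_w := fun q s => g (Delta [:: s] (class_lang q));
  mdfa_rho := fun q => class_lang q [::] |}.

Lemma class_lang_cls (a : word) (gam : word) :
  class_lang (cls a) gam = S f a (f l) gam.
Proof. by rewrite /class_lang -cls_congr. Qed.

Lemma class_langE (q : Q) (gam : word) :
  class_lang q gam = @state_lang class_mdfa q gam.
Proof.
elim: gam q => [|s gam IH] q; first by rewrite state_lang_nil.
rewrite state_lang_cons /= -IH class_lang_cls S_rcons.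
by rewrite -[class_lang q _]/(Delta [:: s] (class_lang q) gam) -gf_fact.
Qed.

Lemma class_mdfa_recognizes : recognizable mul l.
Proof.
exists class_mdfa => gam.
rewrite mdfa_langE /= -class_langE class_lang_cls S_nil.
exact: gf_fact.
Qed.

End ClassAutomaton.

Lemma finite_index_of_recognizable (l : mlang) :
  recognizable mul l ->
  exists (g : mlang -> M) (f : mlang -> mlang),
    factorization mul g f /\ finite_index (congr_rel f (f l)).
Proof.
case=> A Al; exists (scaled_g (@state_lang A)), (scaled_f (@state_lang A)).
split; first exact: scaled_split_factorization.
exact: congr_rel_finite_index (S_scaled_split_state Al).
Qed.

Lemma recognizable_of_finite_index (g : mlang -> M) (f : mlang -> mlang) (l : mlang) :
  factorization mul g f -> finite_index (congr_rel f (f l)) -> recognizable mul l.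
Proof.
move=> gf_fact /finite_index_classes [Q [rep [cls cls_congr]]].
exact: (class_mdfa_recognizes gf_fact cls_congr).
Qed.

End MonoidLanguages.

Theorem theorem1 (M : Type) (one : M) (mul : Monoid.law one) (Sigma : finType)
    (l : seq Sigma -> M) :
  recognizable mul l <->
  exists (g : mlang M Sigma -> M) (f : mlang M Sigma -> mlang M Sigma),
    factorization mul g f /\ finite_index (congr_rel f (f l)).
Proof.
split; first exact: finite_index_of_recognizable.
by case=> g [f [gf_fact f_fin]]; exact: recognizable_of_finite_index gf_fact f_fin.
Qed.
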